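(* For every sample size $n$, every sample $\mathbf{x}_1,\dots,\mathbf{x}_n\in\mathbb{R}$ and every $N\ge 0$, the Hermite series distribution function estimator satisfies $\sup_{x\in\mathbb{R}}|\hat F_N(x)|\le C N^{17/12}$ for all $N\ge1$, where $C$ is a constant not depending on $N$, $n$, the sample, or $x$; i.e. $\max_x|\hat F_N(x)|=O(N^{17/12})$ as $N\to\infty$. (The same holds for the estimator built from the $\mathbf{y}_i$.)
   Context: Hermite functions: $h_k(x)=(2^k k!\sqrt{\pi})^{-1/2}e^{-x^2/2}H_k(x)$ with $H_k(x)=(-1)^k e^{x^2}\frac{d^k}{dx^k}e^{-x^2}$. Given observations $\mathbf{x}_1,\dots,\mathbf{x}_n$, let $\hat a_k=\frac1n\sum_{i=1}^n h_k(\mathbf{x}_i)$ and $\hat F_N(x)=\sum_{k=0}^N\hat a_k\int_{-\infty}^x h_k(t)\,dt$. *)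

From Stdlib Require Import Reals Arith Factorial.
From Coquelicot Require Import Coquelicot.
Open Scope R_scope.

Definition hermiteH (k : nat) (x : R) : R :=
  (-1) ^ k * exp (x ^ 2) * Derive_n (fun t => exp (- t ^ 2)) k x.

Definition hermite_fn (k : nat) (x : R) : R :=
  / sqrt (2 ^ k * INR (fact k) * sqrt PI) * exp (- x ^ 2 / 2) * hermiteH k x.

Definition hermite_int (k : nat) (x : R) : R :=
  RInt_gen (hermite_fn k) (Rbar_locally m_infty) (at_point x).

(* hat a_k = (1/n) sum_{i=1}^n h_k(x_i); observations indexed 0..n-1. *)
Definition a_hat (n : nat) (xs : nat -> R) (k : nat) : R :=
  / INR n * sum_f_R0 (fun i => hermite_fn k (xs i)) (pred n).

Definition F_hat (n : nat) (xs : nat -> R) (N : nat) (x : R) : R :=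
  sum_f_R0 (fun k => a_hat n xs k * hermite_int k x) N.

From Stdlib Require Import Reals Lra Lia Factorial.
From Coquelicot Require Import Coquelicot.
Open Scope R_scope.

(* F_hat_N(x) is the improper integral over (-oo, x] of the finite expansion
   f = sum_(k<=N) a_k h_k.  The argument has three ingredients.
   1. Hermite functions.  Rodrigues' formula is identified with the
      three-term recurrence; this yields the ladder relations
      h_k' = t h_k - sqrt(2(k+1)) h_(k+1), and every h_k is rapidly decreasing.
   2. Orthonormality and energy.  Integrating the ladder relations over
      [-m, m], the Gram matrix of (h_k) tends to |h_0|^2 times the identity, so
      int (sum c_k h_k)^2 <= c0 sum c_k^2 on every segment, where c0 bounds
      int h_0^2.  Since f' = t f - U with U = sum c_k sqrt(2(k+1)) h_(k+1), the
      identity (1 + t^2) f^2 + f'^2 = U^2 + (t f^2)' bounds the weighted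
      energy int (1 + t^2) f^2 + f'^2 by c0 sum c_k^2 2(k+1).  Applied to a
      single h_k it gives the uniform bound h_k^2 <= 2 c0 sqrt(2(k+1)), hence
      the same bound for the empirical coefficients a_k.
   3. Conclusion.  2|f| <= eps (1+t^2) f^2 + 1/(eps (1+t^2)) gives
      |int_a^x f| <= (eps Q + pi/eps)/2 with Q = O(N^(5/2)) the energy;
      eps = N^(-5/4) balances the two terms.
   The file first sets up generic tools (derivative rules, integrals of
   everywhere-differentiable functions, rapidly decreasing functions, improper
   integrals), then the Hermite-specific results; everything depending on c0 is
   in the section Gram00Bound, and lemma1 comes last. *)

Lemma is_derive_transport (f g : R -> R) (x l l' : R) :
  (forall t, f t = g t) -> l = l' -> is_derive f x l -> is_derive g x l'.
Proof. intros Hfg <- Hf. exact (is_derive_ext f g x l Hfg Hf). Qed.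

Lemma is_derive_Rmult (f g : R -> R) (x df dg : R) :
  is_derive f x df -> is_derive g x dg ->
  is_derive (fun t => f t * g t) x (df * g x + f x * dg).
Proof. intros Hf Hg. apply (is_derive_mult f g x df dg Hf Hg). intros; apply Rmult_comm. Qed.

Lemma is_derive_Rplus (f g : R -> R) (x df dg : R) :
  is_derive f x df -> is_derive g x dg -> is_derive (fun t => f t + g t) x (df + dg).
Proof. intros Hf Hg. apply (is_derive_plus f g x df dg Hf Hg). Qed.

(** * Hermite polynomials *)

Fixpoint hermite_poly (k : nat) (x : R) : R :=
  match k with
  | O => 1
  | S O => 2 * x
  | S ((S j) as k') => 2 * x * hermite_poly k' x - 2 * INR k' * hermite_poly j x
  end.

Lemma hermite_poly_SS k x :
  hermite_poly (S (S k)) x = 2 * x * hermite_poly (S k) x - 2 * INR (S k) * hermite_poly k x.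
Proof. reflexivity. Qed.

(* Appell property H_(k+1)' = 2(k+1) H_k, proved for two consecutive indices at
   once because the recurrence looks two steps back. *)
Lemma is_derive_hermite_poly_pair k :
  (forall x, is_derive (hermite_poly (S k)) x (2 * INR (S k) * hermite_poly k x)) /\
  (forall x, is_derive (hermite_poly (S (S k))) x (2 * INR (S (S k)) * hermite_poly (S k) x)).
Proof.
  induction k as [|k [IH1 IH2]]; split; intro x.
  - simpl. auto_derive; trivial. ring.
  - simpl. auto_derive; trivial. ring.
  - apply IH2.
  - eapply is_derive_transport with (f := fun t =>
        2 * t * hermite_poly (S (S k)) t + (- 2 * INR (S (S k))) * hermite_poly (S k) t).
    3:{ apply is_derive_Rplus.
        - apply is_derive_Rmult; [|apply IH2]. auto_derive; trivial.
        - apply is_derive_scal, IH1. }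
    + intro t. rewrite (hermite_poly_SS (S k)). ring.
    + rewrite (hermite_poly_SS k), !S_INR. simpl. ring.
Qed.

Lemma is_derive_hermite_poly k (x : R) :
  is_derive (hermite_poly k) x (2 * INR k * hermite_poly (pred k) x).
Proof.
  destruct k as [|k].
  - apply (is_derive_transport (fun _ => 1) _ x 0); [reflexivity | simpl; ring |].
    auto_derive; trivial.
  - apply is_derive_hermite_poly_pair.
Qed.

Definition gaussian_derivative (k : nat) (x : R) : R :=
  (-1) ^ k * hermite_poly k x * exp (- x ^ 2).

Lemma is_derive_gaussian (x : R) :
  is_derive (fun t => exp (- t ^ 2)) x (- (2 * x) * exp (- x ^ 2)).
Proof. auto_derive; trivial. simpl; ring. Qed.

Lemma is_derive_gaussian_derivative k (x : R) :
  is_derive (gaussian_derivative k) x (gaussian_derivative (S k) x).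
Proof.
  unfold gaussian_derivative. destruct k as [|k].
  - simpl. auto_derive; trivial. ring.
  - eapply is_derive_transport with (f := fun t => (-1) ^ S k * (hermite_poly (S k) t * exp (- t ^ 2))).
    3:{ apply is_derive_scal, is_derive_Rmult.
        - apply is_derive_hermite_poly.
        - apply is_derive_gaussian. }
    + intro t; ring.
    + rewrite hermite_poly_SS. simpl pred. simpl pow. ring.
Qed.

Lemma hermiteH_eq k x : hermiteH k x = hermite_poly k x.
Proof.
  assert (Hd : forall x, Derive_n (fun t => exp (- t ^ 2)) k x = gaussian_derivative k x).
  { induction k as [|k IH]; intro y.
    - unfold gaussian_derivative; simpl; ring.
    - change (Derive (Derive_n (fun t => exp (- t ^ 2)) k) y = gaussian_derivative (S k) y).
      rewrite (Derive_ext _ _ y IH).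
      apply is_derive_unique, is_derive_gaussian_derivative. }
  unfold hermiteH. rewrite Hd. unfold gaussian_derivative.
  replace ((-1) ^ k * exp (x ^ 2) * ((-1) ^ k * hermite_poly k x * exp (- x ^ 2)))
    with (((-1) * (-1)) ^ k * hermite_poly k x * exp (x ^ 2 + - x ^ 2))
    by (rewrite Rpow_mult_distr, exp_plus; ring).
  replace (x ^ 2 + - x ^ 2) with 0 by ring.
  replace ((-1) * (-1)) with 1 by ring.
  rewrite exp_0, pow1. ring.
Qed.

(** * Hermite functions *)

Notation h := hermite_fn.

Definition hermite_norm (k : nat) : R := / sqrt (2 ^ k * INR (fact k) * sqrt PI).
Definition ladder (k : nat) : R := sqrt (2 * INR k).

Lemma hermite_fn_eq k x : h k x = hermite_norm k * exp (- x ^ 2 / 2) * hermite_poly k x.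
Proof. unfold hermite_fn, hermite_norm. rewrite hermiteH_eq. reflexivity. Qed.

Lemma hermite_norm_arg_pos k : 0 < 2 ^ k * INR (fact k) * sqrt PI.
Proof.
  apply Rmult_lt_0_compat; [apply Rmult_lt_0_compat|].
  - apply pow_lt; lra.
  - apply lt_0_INR, lt_O_fact.
  - apply sqrt_lt_R0, PI_RGT_0.
Qed.

Lemma ladder_pos k : 0 < ladder (S k).
Proof. unfold ladder. apply sqrt_lt_R0. rewrite S_INR. pose proof (pos_INR k). lra. Qed.

Lemma ladder_sq k : ladder k * ladder k = 2 * INR k.
Proof. unfold ladder. apply sqrt_sqrt. pose proof (pos_INR k). lra. Qed.

Lemma ladder_0 : ladder 0 = 0.
Proof. unfold ladder. simpl. rewrite Rmult_0_r. apply sqrt_0. Qed.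

Lemma hermite_norm_S k : hermite_norm (S k) * ladder (S k) = hermite_norm k.
Proof.
  unfold hermite_norm.
  replace (2 ^ S k * INR (fact (S k)) * sqrt PI)
    with ((2 * INR (S k)) * (2 ^ k * INR (fact k) * sqrt PI))
    by (rewrite fact_simpl, mult_INR; simpl pow; ring).
  rewrite sqrt_mult.
  2:{ rewrite S_INR; pose proof (pos_INR k); lra. }
  2:{ left; apply hermite_norm_arg_pos. }
  fold (ladder (S k)). pose proof (ladder_pos k).
  assert (0 < sqrt (2 ^ k * INR (fact k) * sqrt PI)) by apply sqrt_lt_R0, hermite_norm_arg_pos.
  field. split; lra.
Qed.

Lemma hermite_fn_rec k x :
  ladder (S k) * h (S k) x = 2 * x * h k x - ladder k * h (pred k) x.
Proof.
  rewrite !hermite_fn_eq, <- (hermite_norm_S k).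
  destruct k as [|j].
  - rewrite ladder_0. simpl. ring.
  - simpl pred. rewrite hermite_poly_SS, <- (hermite_norm_S j), <- ladder_sq.
    rewrite <- (hermite_norm_S (S j)). ring.
Qed.

Lemma is_derive_half_gaussian (x : R) :
  is_derive (fun t => exp (- t ^ 2 / 2)) x (- x * exp (- x ^ 2 / 2)).
Proof.
  auto_derive; trivial.
  replace (- (x * (x * 1)) * / 2) with (- x ^ 2 / 2) by (unfold Rdiv; ring). field.
Qed.

Lemma is_derive_hermite_fn k (x : R) :
  is_derive (h k) x (x * h k x - ladder (S k) * h (S k) x).
Proof.
  rewrite hermite_fn_rec.
  eapply is_derive_transport with
    (f := fun t => hermite_norm k * (exp (- t ^ 2 / 2) * hermite_poly k t)).
  3:{ apply is_derive_scal, is_derive_Rmult.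
      - apply is_derive_half_gaussian.
      - apply is_derive_hermite_poly. }
  - intro t. rewrite hermite_fn_eq. ring.
  - rewrite !hermite_fn_eq.
    destruct k as [|j].
    + rewrite ladder_0. simpl. ring.
    + simpl pred. rewrite <- (hermite_norm_S j), <- ladder_sq. ring.
Qed.

Lemma is_derive_hermite_fn_S k (x : R) :
  is_derive (h (S k)) x (ladder (S k) * h k x - x * h (S k) x).
Proof.
  eapply is_derive_transport; [reflexivity | | apply is_derive_hermite_fn].
  pose proof (hermite_fn_rec (S k) x) as E. simpl pred in E. rewrite E. ring.
Qed.

(* Every function we integrate is differentiable on all of R, which gives
   continuity and hence Riemann integrability on every segment. *)
Definition Derivable (f : R -> R) : Prop := forall x, ex_derive f x.

Lemma Derivable_plus f g : Derivable f -> Derivable g -> Derivable (fun t => f t + g t).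
Proof. intros F G x. apply (ex_derive_plus f g x (F x) (G x)). Qed.
Lemma Derivable_mult f g : Derivable f -> Derivable g -> Derivable (fun t => f t * g t).
Proof. intros F G x. apply (ex_derive_mult f g x (F x) (G x)). Qed.
Lemma Derivable_scal c f : Derivable f -> Derivable (fun t => c * f t).
Proof. intros F x. apply (ex_derive_scal f c x (F x)). Qed.
Lemma Derivable_minus f g : Derivable f -> Derivable g -> Derivable (fun t => f t - g t).
Proof. intros F G x. apply (ex_derive_minus f g x (F x) (G x)). Qed.
Lemma Derivable_opp f : Derivable f -> Derivable (fun t => - f t).
Proof. intros F x. apply (ex_derive_opp f x (F x)). Qed.
Lemma Derivable_id : Derivable (fun t => t).
Proof. intro x. apply (ex_derive_id (K := R_AbsRing)). Qed.
Lemma Derivable_const c : Derivable (fun _ => c).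
Proof. intro x. apply (ex_derive_const (K := R_AbsRing)). Qed.
Lemma Derivable_inv_1_sq : Derivable (fun t => / (1 + t ^ 2)).
Proof. intro x. auto_derive. pose proof (pow2_ge_0 x). simpl in *. lra. Qed.
Lemma Derivable_sum (F : nat -> R -> R) M :
  (forall j, Derivable (F j)) -> Derivable (fun t => sum_f_R0 (fun j => F j t) M).
Proof. intro HF. induction M; simpl; [apply HF | apply Derivable_plus; auto]. Qed.

#[export] Hint Resolve Derivable_plus Derivable_mult Derivable_scal Derivable_minus
  Derivable_opp Derivable_id Derivable_const Derivable_inv_1_sq : derivable.

Ltac derivable := auto 20 with derivable.

Lemma ex_RInt_Derivable f a b : Derivable f -> ex_RInt f a b.
Proof.
  intro F. apply (ex_RInt_continuous (V := R_CompleteNormedModule)).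
  intros x _. apply (ex_derive_continuous (K := R_AbsRing) (V := R_NormedModule)), F.
Qed.

Section RIntRules.
Variables (f g : R -> R) (Df : Derivable f) (Dg : Derivable g).

Lemma RInt_Rplus a b : RInt (fun t => f t + g t) a b = RInt f a b + RInt g a b.
Proof. apply (RInt_plus (V := R_CompleteNormedModule)); apply ex_RInt_Derivable; auto. Qed.
Lemma RInt_Rminus a b : RInt (fun t => f t - g t) a b = RInt f a b - RInt g a b.
Proof. apply (RInt_minus (V := R_CompleteNormedModule)); apply ex_RInt_Derivable; auto. Qed.
Lemma RInt_Rscal c a b : RInt (fun t => c * f t) a b = c * RInt f a b.
Proof. apply (RInt_scal (V := R_CompleteNormedModule)); apply ex_RInt_Derivable; auto. Qed.
Lemma RInt_Chasles_R a b c : RInt f a b + RInt f b c = RInt f a c.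
Proof. apply (RInt_Chasles (V := R_CompleteNormedModule)); apply ex_RInt_Derivable; auto. Qed.
Lemma RInt_swap_R a b : RInt f a b = - RInt f b a.
Proof. rewrite <- (opp_RInt_swap (V := R_CompleteNormedModule)); [reflexivity|]. apply ex_RInt_Derivable; auto. Qed.

Lemma RInt_le_R a b : a <= b -> (forall t, f t <= g t) -> RInt f a b <= RInt g a b.
Proof. intros Hab Hfg. apply RInt_le; auto; apply ex_RInt_Derivable; auto. Qed.

Lemma RInt_mono_interval a b a' b' : (forall t, 0 <= f t) ->
  a' <= a -> a <= b -> b <= b' -> RInt f a b <= RInt f a' b'.
Proof.
  intros Hpos H1 H2 H3.
  rewrite <- (RInt_Chasles_R a' a b'), <- (RInt_Chasles_R a b b').
  assert (0 <= RInt f a' a) by (apply RInt_ge_0; auto; apply ex_RInt_Derivable; auto).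
  assert (0 <= RInt f b b') by (apply RInt_ge_0; auto; apply ex_RInt_Derivable; auto).
  lra.
Qed.
End RIntRules.

Lemma RInt_antiderivative (f F : R -> R) a b :
  Derivable f -> (forall x, is_derive F x (f x)) -> RInt f a b = F b - F a.
Proof.
  intros Df HF. apply is_RInt_unique, (is_RInt_derive (V := R_CompleteNormedModule)); intros x _.
  - apply HF.
  - apply (ex_derive_continuous (K := R_AbsRing) (V := R_NormedModule)), Df.
Qed.

Lemma RInt_ext_R (f g : R -> R) a b : (forall t, f t = g t) -> RInt f a b = RInt g a b.
Proof. intro E. apply RInt_ext. intros; auto. Qed.

Lemma RInt_inv_1_sq a b : RInt (fun t => / (1 + t ^ 2)) a b = atan b - atan a.
Proof.
  apply RInt_antiderivative; [derivable|].
  intro x. eapply is_derive_transport; [reflexivity| |apply is_derive_atan].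
  unfold Rsqr. simpl. f_equal. ring.
Qed.

Lemma eventually_INR_ge r : eventually (fun m => r <= INR m).
Proof.
  apply (is_lim_seq_INR (fun t => r <= t)). exists r. intros; lra.
Qed.

Lemma le_of_vanishing_error x y (e : nat -> R) :
  eventually (fun m => x <= y + e m) -> is_lim_seq e 0 -> x <= y.
Proof.
  intros H He.
  assert (Hy : is_lim_seq (fun m => y + e m) (y + 0))
    by (apply is_lim_seq_plus'; [apply is_lim_seq_const | exact He]).
  rewrite Rplus_0_r in Hy.
  exact (is_lim_seq_le_loc (fun _ => x) _ x y H (is_lim_seq_const x) Hy).
Qed.

Lemma is_lim_seq_scal_l_real (u : nat -> R) (c l : R) :
  is_lim_seq u l -> is_lim_seq (fun m => c * u m) (c * l).
Proof. intro H. exact (is_lim_seq_mult' _ _ _ _ (is_lim_seq_const c) H). Qed.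

(** * Rapidly decreasing functions *)

Definition rapid (g : R -> R) : Prop :=
  forall m, exists C, forall t, Rabs (g t) * (1 + t ^ 2) ^ m <= C.

Lemma one_le_1_sq t : 1 <= 1 + t ^ 2.
Proof. pose proof (pow2_ge_0 t). lra. Qed.

Lemma Rabs_le_1_sq t : Rabs t <= 1 + t ^ 2.
Proof.
  pose proof (Rabs_pos t). replace (t ^ 2) with (Rabs t * Rabs t).
  - nra.
  - rewrite <- Rabs_mult, Rabs_right; [ring | nra].
Qed.

Lemma rapid_ext f g : (forall t, f t = g t) -> rapid f -> rapid g.
Proof. intros E Hf m. destruct (Hf m) as [C HC]. exists C. intro t. rewrite <- E. auto. Qed.

Lemma rapid_plus f g : rapid f -> rapid g -> rapid (fun t => f t + g t).
Proof.
  intros Hf Hg m. destruct (Hf m) as [C HC], (Hg m) as [D HD]. exists (C + D). intro t.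
  specialize (HC t). specialize (HD t). pose proof (Rabs_triang (f t) (g t)).
  pose proof (pow_le _ m (Rle_trans _ _ _ Rle_0_1 (one_le_1_sq t))). nra.
Qed.

Lemma rapid_scal c f : rapid f -> rapid (fun t => c * f t).
Proof.
  intros Hf m. destruct (Hf m) as [C HC]. exists (Rabs c * C). intro t.
  rewrite Rabs_mult, Rmult_assoc. apply Rmult_le_compat_l; [apply Rabs_pos | auto].
Qed.

(* Multiplying by t costs one power of (1 + t^2). *)
Lemma rapid_tmul f : rapid f -> rapid (fun t => t * f t).
Proof.
  intros Hf m. destruct (Hf (S m)) as [C HC]. exists C. intro t.
  eapply Rle_trans; [|apply (HC t)]. rewrite Rabs_mult.
  change ((1 + t ^ 2) ^ S m) with ((1 + t ^ 2) * (1 + t ^ 2) ^ m).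
  pose proof (Rabs_le_1_sq t). pose proof (Rabs_pos (f t)).
  pose proof (pow_le _ m (Rle_trans _ _ _ Rle_0_1 (one_le_1_sq t))).
  replace (Rabs t * Rabs (f t) * (1 + t ^ 2) ^ m) with (Rabs (f t) * (1 + t ^ 2) ^ m * Rabs t) by ring.
  replace (Rabs (f t) * ((1 + t ^ 2) * (1 + t ^ 2) ^ m))
    with (Rabs (f t) * (1 + t ^ 2) ^ m * (1 + t ^ 2)) by ring.
  apply Rmult_le_compat_l; [apply Rmult_le_pos|]; auto.
Qed.

Lemma rapid_bounded g : rapid g -> exists B, forall t, Rabs (g t) <= B.
Proof. intros Hg. destruct (Hg 0%nat) as [B HB]. exists B. intro t. specialize (HB t). simpl in HB. lra. Qed.

Lemma rapid_mult f g : rapid f -> rapid g -> rapid (fun t => f t * g t).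
Proof.
  intros Hf Hg m. destruct (Hf m) as [C HC], (rapid_bounded g Hg) as [B HB].
  exists (C * B). intro t. specialize (HC t). specialize (HB t). rewrite Rabs_mult.
  pose proof (Rabs_pos (f t)). pose proof (Rabs_pos (g t)).
  pose proof (pow_le _ m (Rle_trans _ _ _ Rle_0_1 (one_le_1_sq t))).
  replace (Rabs (f t) * Rabs (g t) * (1 + t ^ 2) ^ m)
    with (Rabs (f t) * (1 + t ^ 2) ^ m * Rabs (g t)) by ring.
  apply Rmult_le_compat; auto. apply Rmult_le_pos; auto.
Qed.

Lemma rapid_sum (F : nat -> R -> R) M :
  (forall j, rapid (F j)) -> rapid (fun t => sum_f_R0 (fun j => F j t) M).
Proof. intro HF. induction M; simpl; [apply HF | apply rapid_plus; auto]. Qed.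

Lemma rapid_lim g (s : nat -> R) :
  rapid g -> (forall m, INR m <= s m ^ 2) -> is_lim_seq (fun m => g (s m)) 0.
Proof.
  intros Hg Hs. destruct (Hg 1%nat) as [C HC]. apply is_lim_seq_abs_0.
  apply is_lim_seq_le_le with (u := fun _ => 0) (w := fun m => C * / (1 + INR m)).
  - intro m. split; [apply Rabs_pos|]. specialize (HC (s m)). specialize (Hs m).
    pose proof (pos_INR m). rewrite pow_1 in HC.
    apply Rmult_le_reg_r with (1 + INR m); [lra|].
    rewrite Rmult_assoc, Rinv_l, Rmult_1_r by lra.
    eapply Rle_trans; [|exact HC]. apply Rmult_le_compat_l; [apply Rabs_pos | lra].
  - apply is_lim_seq_const.
  - replace (Finite 0) with (Rbar_mult C 0) by (simpl; f_equal; ring).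
    apply is_lim_seq_scal_l.
    assert (Hinf : is_lim_seq (fun m => 1 + INR m) p_infty).
    { eapply is_lim_seq_plus; [apply is_lim_seq_const | apply is_lim_seq_INR | simpl; constructor]. }
    exact (is_lim_seq_inv _ _ Hinf ltac:(discriminate)).
Qed.

Lemma INR_le_sq m : INR m <= INR m ^ 2.
Proof. destruct m; [simpl; lra|]. rewrite S_INR. pose proof (pos_INR m). nra. Qed.

Lemma rapid_lim_pos g : rapid g -> is_lim_seq (fun m => g (INR m)) 0.
Proof. intro Hg. apply rapid_lim; [exact Hg | apply INR_le_sq]. Qed.

Lemma rapid_lim_neg g : rapid g -> is_lim_seq (fun m => g (- INR m)) 0.
Proof.
  intro Hg. apply rapid_lim; [exact Hg|]. intro m.
  replace ((- INR m) ^ 2) with (INR m ^ 2) by ring. apply INR_le_sq.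
Qed.

Lemma rapid_boundary_lim W : rapid W -> is_lim_seq (fun m => W (INR m) - W (- INR m)) 0.
Proof.
  intro HW. replace 0 with (0 - 0) by ring.
  apply is_lim_seq_minus'; [apply rapid_lim_pos | apply rapid_lim_neg]; exact HW.
Qed.

Lemma RInt_decay_bound g C a b : Derivable g ->
  (forall t, Rabs (g t) * (1 + t ^ 2) <= C) -> a <= b ->
  Rabs (RInt g a b) <= C * (atan b - atan a).
Proof.
  intros Dg HC Hab.
  assert (Hb : forall t, - (C * / (1 + t ^ 2)) <= g t <= C * / (1 + t ^ 2)).
  { intro t. pose proof (one_le_1_sq t). apply Rabs_le_between.
    apply Rmult_le_reg_r with (1 + t ^ 2); [lra|].
    rewrite Rmult_assoc, Rinv_l, Rmult_1_r by lra. apply HC. }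
  assert (I1 : RInt g a b <= RInt (fun t => C * / (1 + t ^ 2)) a b)
    by (apply RInt_le_R; derivable; intro; apply Hb).
  assert (I2 : RInt (fun t => - C * / (1 + t ^ 2)) a b <= RInt g a b)
    by (apply RInt_le_R; derivable; intro t; rewrite Ropp_mult_distr_l_reverse; apply Hb).
  rewrite RInt_Rscal, RInt_inv_1_sq in I1, I2 by derivable.
  apply Rabs_le. lra.
Qed.

Lemma atan_le_id u : 0 <= u -> atan u <= u.
Proof.
  intro Hu.
  assert (H : RInt (fun t => / (1 + t ^ 2)) 0 u <= RInt (fun _ => 1) 0 u).
  { apply RInt_le_R; derivable. intro x. rewrite <- Rinv_1 at 2.
    apply Rinv_le_contravar; [lra | apply one_le_1_sq]. }
  rewrite RInt_inv_1_sq, atan_0, (RInt_const (V := R_CompleteNormedModule)) in H.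
  change (atan u - 0 <= (u - 0) * 1) in H. lra.
Qed.

Lemma atan_tail a b M : 0 < M -> a <= b -> b <= - M -> atan b - atan a <= / M.
Proof.
  intros HM Hab HbM.
  assert (atan b <= atan (- M)).
  { destruct (Req_dec b (- M)) as [->|]; [lra|]. left; apply atan_increasing; lra. }
  pose proof (atan_bound a). rewrite atan_opp in H.
  pose proof (atan_inv M HM).
  pose proof (atan_le_id (/ M) ltac:(left; apply Rinv_0_lt_compat; lra)).
  lra.
Qed.

(** * Improper integrals on (-oo, x] *)

Lemma rapid_tail_small g eps : Derivable g -> rapid g -> 0 < eps ->
  exists M, forall a b, a <= b -> b < - M -> Rabs (RInt g a b) < eps.
Proof.
  intros Dg Hg He. destruct (Hg 1%nat) as [C HC]. setoid_rewrite pow_1 in HC.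
  assert (HC0 : 0 <= C)
    by (pose proof (HC 0); pose proof (Rabs_pos (g 0)); pose proof (one_le_1_sq 0); nra).
  set (M := (C + 1) / eps + 1).
  assert (HM : 0 < M) by (unfold M; assert (0 <= (C + 1) / eps) by (apply Rle_mult_inv_pos; lra); lra).
  assert (HCM : C / M < eps).
  { assert (eps * M = C + 1 + eps) by (unfold M; field; lra).
    apply Rmult_lt_reg_r with M; auto. unfold Rdiv. rewrite Rmult_assoc, Rinv_l; lra. }
  exists M. intros a b Hab HbM.
  eapply Rle_lt_trans; [apply (RInt_decay_bound g C); auto|].
  eapply Rle_lt_trans; [|exact HCM].
  apply Rmult_le_compat_l; [lra | apply atan_tail; lra].
Qed.

(* A rapid everywhere-differentiable function is improperly integrable on
   (-oo, x]: the integrals over [a, x] satisfy the Cauchy criterion as a -> -oo. *)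
Lemma rapid_improper_integrable g x : Derivable g -> rapid g ->
  exists L : R, is_RInt_gen g (Rbar_locally m_infty) (at_point x) L.
Proof.
  intros Dg Hg.
  assert (Hunique : filter_prod (Rbar_locally m_infty) (at_point x)
     (fun ab => (exists y : R_CompleteSpace, is_RInt g (fst ab) (snd ab) y) /\
        (forall y1 y2 : R_CompleteSpace, is_RInt g (fst ab) (snd ab) y1 ->
           is_RInt g (fst ab) (snd ab) y2 -> y1 = y2))).
  { apply filter_forall. intros [a b]. split.
    - exists (RInt g a b). apply (RInt_correct (V := R_CompleteNormedModule)), ex_RInt_Derivable, Dg.
    - intros y1 y2 H1 H2. simpl in *.
      apply (is_RInt_unique (V := R_CompleteNormedModule)) in H1, H2. congruence. }
  destruct (proj1 (filterlimi_locally_cauchy (U := R_CompleteSpace)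
     (F := filter_prod (Rbar_locally m_infty) (at_point x))
     (fun ab y => is_RInt g (fst ab) (snd ab) y) Hunique)) as [L HL].
  2: exists L; exact HL.
  intro eps. destruct (rapid_tail_small g eps Dg Hg (cond_pos eps)) as [M Htail].
  exists (fun ab => fst ab < - M /\ snd ab = x). split.
  { apply (Filter_prod _ _ _ (fun a => a < - M) (fun b => b = x)); [exists (- M) | reflexivity |]; auto. }
  intros [u1 u2] [v1 v2] [Hu1 Hu2] [Hv1 Hv2] u' v' Hu Hv. simpl in *. subst u2 v2.
  apply (is_RInt_unique (V := R_CompleteNormedModule)) in Hu, Hv. subst u' v'.
  change (Rabs (RInt g v1 x - RInt g u1 x) < eps).
  assert (E : @eq R (RInt g v1 x - RInt g u1 x) (RInt g v1 u1))
    by (rewrite <- (RInt_Chasles_R g Dg v1 u1 x); ring).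
  rewrite E. destruct (Rle_dec v1 u1) as [Hvu|Hvu].
  - apply Htail; lra.
  - rewrite RInt_swap_R, Rabs_Ropp by exact Dg. apply Htail; lra.
Qed.

Lemma RInt_gen_seq_lim g x : Derivable g -> rapid g ->
  is_lim_seq (fun m => RInt g (- INR m) x) (RInt_gen g (Rbar_locally m_infty) (at_point x)).
Proof.
  intros Dg Hg. destruct (rapid_improper_integrable g x Dg Hg) as [L HL].
  rewrite (is_RInt_gen_unique (V := R_CompleteNormedModule) _ _ HL).
  apply is_lim_seq_spec. intro eps.
  destruct (HL (ball L eps) (locally_ball L eps)) as [Q P [M HM] HP Himp].
  destruct (eventually_INR_ge (- M + 1)) as [N0 HN0].
  exists N0. intros m Hm.
  destruct (Himp (- INR m) x) as [y [Hy1 Hy2]]; [apply HM; specialize (HN0 m Hm); lra | exact HP |].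
  simpl in Hy1. apply (is_RInt_unique (V := R_CompleteNormedModule)) in Hy1. subst y. exact Hy2.
Qed.

Lemma Derivable_hermite_fn k : Derivable (h k).
Proof. intro x. eexists. apply is_derive_hermite_fn. Qed.

#[export] Hint Resolve Derivable_hermite_fn : derivable.

(* (1 + t^2)^m e^(-t^2/2) <= 2^m m! e^(1/2), from u^m/m! <= e^u at u = (1+t^2)/2. *)
Lemma poly_half_gaussian_bound m t :
  (1 + t ^ 2) ^ m * exp (- t ^ 2 / 2) <= 2 ^ m * INR (fact m) * exp (1 / 2).
Proof.
  set (u := (1 + t ^ 2) / 2).
  assert (Hu : 0 <= u) by (unfold u; pose proof (pow2_ge_0 t); lra).
  assert (Hf : 0 < INR (fact m)) by apply lt_0_INR, lt_O_fact.
  assert (Hterm : u ^ m / INR (fact m) <= exp u).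
  { eapply Rle_trans; [|apply (exp_ge_taylor u m Hu)].
    destruct m as [|m]; simpl; [lra|].
    assert (0 <= sum_f_R0 (fun k => u ^ k / INR (fact k)) m); [|lra].
    apply cond_pos_sum. intro k. apply Rmult_le_pos; [apply pow_le; auto|].
    left; apply Rinv_0_lt_compat, lt_0_INR, lt_O_fact. }
  assert (Hexp : exp u * exp (- t ^ 2 / 2) = exp (1 / 2))
    by (rewrite <- exp_plus; f_equal; unfold u; field).
  replace ((1 + t ^ 2) ^ m) with (2 ^ m * (u ^ m / INR (fact m)) * INR (fact m))
    by (unfold u, Rdiv; rewrite Rpow_mult_distr, pow_inv; field;
        split; [lra | apply pow_nonzero; lra]).
  rewrite <- Hexp.
  pose proof (exp_pos (- t ^ 2 / 2)). pose proof (pow_lt 2 m ltac:(lra)).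
  replace (2 ^ m * INR (fact m) * (exp u * exp (- t ^ 2 / 2)))
    with (2 ^ m * exp u * INR (fact m) * exp (- t ^ 2 / 2)) by ring.
  apply Rmult_le_compat_r; [lra|]. apply Rmult_le_compat_r; [lra|].
  apply Rmult_le_compat_l; lra.
Qed.

Lemma rapid_hermite_fn_0 : rapid (h 0).
Proof.
  intro m. exists (Rabs (hermite_norm 0) * (2 ^ m * INR (fact m) * exp (1 / 2))). intro t.
  rewrite hermite_fn_eq, Rmult_1_r, Rabs_mult, (Rabs_right (exp _)) by (left; apply exp_pos).
  rewrite Rmult_assoc. apply Rmult_le_compat_l; [apply Rabs_pos|].
  rewrite Rmult_comm. apply poly_half_gaussian_bound.
Qed.

(* The recurrence expresses h_(k+1) through t h_k and h_(k-1), so every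
   Hermite function is rapidly decreasing. *)
Lemma rapid_hermite_fn k : rapid (h k).
Proof.
  enough (H : rapid (h k) /\ rapid (h (S k))) by apply H.
  induction k as [|k [IH1 IH2]]; split; auto.
  - apply rapid_hermite_fn_0.
  - apply (rapid_ext (fun t => / ladder 1 * (2 * (t * h 0 t)))).
    + intro t. pose proof (hermite_fn_rec 0 t) as E. pose proof (ladder_pos 0).
      rewrite ladder_0 in E. field_simplify_eq; [lra | lra].
    + apply rapid_scal, rapid_scal, rapid_tmul, rapid_hermite_fn_0.
  - apply (rapid_ext (fun t => / ladder (S (S k)) * (2 * (t * h (S k) t))
                               + (- (ladder (S k) / ladder (S (S k)))) * h k t)).
    + intro t. pose proof (hermite_fn_rec (S k) t) as E. pose proof (ladder_pos (S k)).
      simpl pred in E. field_simplify_eq; [lra | lra].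
    + apply rapid_plus; [apply rapid_scal, rapid_scal, rapid_tmul | apply rapid_scal]; auto.
Qed.

(** * Orthonormality of the Hermite functions, up to vanishing boundary terms *)

Definition gram (p q : nat) (a b : R) : R := RInt (fun t => h p t * h q t) a b.

(* By the ladder relations, sqrt(2(k+1)) (h_k^2 - h_(k+1)^2) = (h_k h_(k+1))'. *)
Lemma gram_diag_step k a b :
  gram k k a b - gram (S k) (S k) a b = (h k b * h (S k) b - h k a * h (S k) a) / ladder (S k).
Proof.
  pose proof (ladder_pos k).
  assert (E : RInt (fun t => ladder (S k) * (h k t * h k t - h (S k) t * h (S k) t)) a b
              = h k b * h (S k) b - h k a * h (S k) a).
  { apply (RInt_antiderivative _ (fun t => h k t * h (S k) t)); [derivable|].
    intro x. eapply is_derive_transport; [reflexivity | |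
      apply is_derive_Rmult; [apply is_derive_hermite_fn | apply is_derive_hermite_fn_S]].
    ring. }
  rewrite RInt_Rscal, RInt_Rminus in E by derivable.
  unfold gram. rewrite <- E. field. lra.
Qed.

(* For p <> q, 2(p - q) h_p h_q is the derivative of
   sqrt(2(p+1)) h_(p+1) h_q - sqrt(2(q+1)) h_p h_(q+1). *)
Definition gram_boundary (p q : nat) (t : R) : R :=
  ladder (S p) * h (S p) t * h q t - ladder (S q) * h p t * h (S q) t.

Lemma gram_off_diag p q a b : p <> q ->
  gram p q a b = (gram_boundary p q b - gram_boundary p q a) / (2 * (INR p - INR q)).
Proof.
  intro Hpq.
  assert (Hne : INR p - INR q <> 0) by (intro H; apply Hpq, INR_eq; lra).
  assert (E : RInt (fun t => (2 * (INR p - INR q)) * (h p t * h q t)) a b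
              = gram_boundary p q b - gram_boundary p q a).
  { apply (RInt_antiderivative _ (gram_boundary p q)); [derivable|].
    intro x. eapply is_derive_transport with (f := fun t =>
      ladder (S p) * (h (S p) t * h q t) + (- ladder (S q)) * (h p t * h (S q) t)).
    3:{ apply is_derive_Rplus; apply is_derive_scal, is_derive_Rmult.
        - apply is_derive_hermite_fn_S.
        - apply is_derive_hermite_fn.
        - apply is_derive_hermite_fn.
        - apply is_derive_hermite_fn_S. }
    - intro t. unfold gram_boundary. ring.
    - pose proof (ladder_sq (S p)). pose proof (ladder_sq (S q)). rewrite !S_INR in *.
      replace (2 * (INR p - INR q)) with (2 * (INR p + 1) - 2 * (INR q + 1)) by ring.
      rewrite <- H, <- H0. ring. }
  rewrite RInt_Rscal in E by derivable. fold (gram p q a b) in E.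
  rewrite <- E. field. exact Hne.
Qed.

Lemma rapid_hermite_prod p q : rapid (fun t => h p t * h q t).
Proof. apply rapid_mult; apply rapid_hermite_fn. Qed.

Definition on_sym (u : R -> R -> R) (m : nat) : R := u (- INR m) (INR m).

Lemma rapid_on_sym_boundary W c :
  rapid W -> is_lim_seq (fun m => (W (INR m) - W (- INR m)) * c) 0.
Proof.
  intro HW. replace (Finite 0) with (Rbar_mult 0 c) by (simpl; f_equal; ring).
  apply is_lim_seq_scal_r, rapid_boundary_lim, HW.
Qed.

Lemma gram_diag_lim k :
  is_lim_seq (fun m => on_sym (gram k k) m - on_sym (gram 0 0) m) 0.
Proof.
  induction k as [|k IH].
  - eapply is_lim_seq_ext; [|apply is_lim_seq_const]. intro m. simpl. ring.
  - pose proof (rapid_on_sym_boundary _ (/ ladder (S k)) (rapid_hermite_prod k (S k))) as HB.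
    pose proof (is_lim_seq_minus' _ _ _ _ IH HB) as H. rewrite Rminus_0_r in H.
    eapply is_lim_seq_ext; [|exact H]. intro m. unfold on_sym. cbv beta.
    pose proof (gram_diag_step k (- INR m) (INR m)) as E. unfold Rdiv in E. lra.
Qed.

Lemma gram_off_diag_lim p q : p <> q -> is_lim_seq (on_sym (gram p q)) 0.
Proof.
  intro Hpq.
  assert (HW : rapid (gram_boundary p q)).
  { apply (rapid_ext (fun t => ladder (S p) * (h (S p) t * h q t)
                               + (- ladder (S q)) * (h p t * h (S q) t))).
    - intro t. unfold gram_boundary. ring.
    - apply rapid_plus; apply rapid_scal, rapid_hermite_prod. }
  eapply is_lim_seq_ext; [|apply (rapid_on_sym_boundary _ (/ (2 * (INR p - INR q))) HW)].
  intro m. unfold on_sym. rewrite gram_off_diag by exact Hpq. unfold Rdiv. ring.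
Qed.

Lemma RInt_bound_of_sym g B (e : nat -> R) : Derivable g -> (forall t, 0 <= g t) ->
  (forall m, on_sym (RInt g) m <= B + e m) -> is_lim_seq e 0 ->
  forall a b, a <= b -> RInt g a b <= B.
Proof.
  intros Dg Hpos Hsym He a b Hab.
  apply (le_of_vanishing_error _ _ e); [|exact He].
  generalize (eventually_INR_ge (Rabs a + Rabs b)). apply filter_imp. intros m Hm.
  eapply Rle_trans; [|apply Hsym]. unfold on_sym.
  pose proof (Rabs_pos a). pose proof (Rabs_pos b).
  pose proof (Rle_abs b). pose proof (Rle_abs (- a)). rewrite Rabs_Ropp in *.
  apply RInt_mono_interval; auto; lra.
Qed.

(* h_0^2 decays like 1/(1 + t^2), so its integrals over segments are bounded. *)
Lemma gram00_bounded : exists c0, forall a b, a <= b -> gram 0 0 a b <= c0.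
Proof.
  destruct (rapid_hermite_prod 0 0 1%nat) as [C HC]. setoid_rewrite pow_1 in HC.
  assert (HC0 : 0 <= C)
    by (specialize (HC 0); pose proof (Rabs_pos (h 0 0 * h 0 0)); pose proof (one_le_1_sq 0); nra).
  exists (C * PI). intros a b Hab.
  pose proof (RInt_decay_bound (fun t => h 0 t * h 0 t) C a b
    ltac:(derivable) HC Hab) as H.
  pose proof (atan_bound a). pose proof (atan_bound b).
  eapply Rle_trans; [apply Rle_abs | eapply Rle_trans; [exact H|]].
  apply Rmult_le_compat_l; lra.
Qed.

Definition hermite_sum (c : nat -> R) (M : nat) (t : R) : R :=
  sum_f_R0 (fun k => c k * h k t) M.

Lemma Derivable_hermite_sum c M : Derivable (hermite_sum c M).
Proof. apply (Derivable_sum (fun k t => c k * h k t)). derivable. Qed.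

#[export] Hint Resolve Derivable_hermite_sum : derivable.

Lemma rapid_hermite_sum c M : rapid (hermite_sum c M).
Proof. apply (rapid_sum (fun k t => c k * h k t)). intro k. apply rapid_scal, rapid_hermite_fn. Qed.

Lemma hermite_sum_S c M t :
  hermite_sum c (S M) t = hermite_sum c M t + c (S M) * h (S M) t.
Proof. reflexivity. Qed.

Lemma sum_sq_nonneg (c : nat -> R) M : 0 <= sum_f_R0 (fun k => c k * c k) M.
Proof. apply cond_pos_sum. intro; apply Rle_0_sqr. Qed.

Lemma hermite_sum_cross_lim c M q : (M < q)%nat ->
  is_lim_seq (on_sym (RInt (fun t => hermite_sum c M t * h q t))) 0.
Proof.
  induction M as [|M IH]; intro Hq.
  - eapply is_lim_seq_ext with (u := fun m => c 0%nat * on_sym (gram 0 q) m).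
    + intro m. unfold on_sym, gram. rewrite <- RInt_Rscal by derivable.
      apply RInt_ext_R. intro t. unfold hermite_sum. simpl. ring.
    + replace (Finite 0) with (Rbar_mult (c 0%nat) 0) by (simpl; f_equal; ring).
      apply is_lim_seq_scal_l, gram_off_diag_lim. lia.
  - assert (H2 : is_lim_seq (fun m => c (S M) * on_sym (gram (S M) q) m) 0).
    { replace (Finite 0) with (Rbar_mult (c (S M)) 0) by (simpl; f_equal; ring).
      apply is_lim_seq_scal_l, gram_off_diag_lim. lia. }
    pose proof (is_lim_seq_plus' _ _ _ _ (IH ltac:(lia)) H2) as H. rewrite Rplus_0_r in H.
    eapply is_lim_seq_ext; [|exact H]. intro m. unfold on_sym, gram.
    rewrite <- RInt_Rscal, <- RInt_Rplus by derivable.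
    apply RInt_ext_R. intro t. rewrite hermite_sum_S. ring.
Qed.

Lemma hermite_sum_sq_lim c M :
  is_lim_seq (fun m => on_sym (RInt (fun t => hermite_sum c M t * hermite_sum c M t)) m
                       - on_sym (gram 0 0) m * sum_f_R0 (fun k => c k * c k) M) 0.
Proof.
  induction M as [|M IH].
  - eapply is_lim_seq_ext; [|apply is_lim_seq_const]. intro m. unfold on_sym, gram. simpl sum_f_R0.
    rewrite (RInt_ext_R (fun t => hermite_sum c 0 t * hermite_sum c 0 t)
                        (fun t => c 0%nat * c 0%nat * (h 0 t * h 0 t))).
    + rewrite RInt_Rscal by derivable. ring.
    + intro t. unfold hermite_sum. simpl. ring.
  - set (d := c (S M)).
    pose proof (is_lim_seq_scal_l _ (2 * d) _ (hermite_sum_cross_lim c M (S M) ltac:(lia))) as H2.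
    pose proof (is_lim_seq_scal_l _ (d * d) _ (gram_diag_lim (S M))) as H3.
    simpl Rbar_mult in H2, H3. rewrite Rmult_0_r in H2, H3.
    pose proof (is_lim_seq_plus' _ _ _ _ IH (is_lim_seq_plus' _ _ _ _ H2 H3)) as H.
    rewrite !Rplus_0_r in H.
    eapply is_lim_seq_ext; [|exact H]. intro m. unfold on_sym, gram. simpl sum_f_R0. fold d.
    rewrite (RInt_ext_R (fun t => hermite_sum c (S M) t * hermite_sum c (S M) t)
      (fun t => hermite_sum c M t * hermite_sum c M t
                + ((2 * d) * (hermite_sum c M t * h (S M) t) + (d * d) * (h (S M) t * h (S M) t)))).
    2:{ intro t. rewrite hermite_sum_S. fold d. ring. }
    rewrite !RInt_Rplus, !RInt_Rscal by derivable. ring.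
Qed.

(** * The energy identity *)

(* If f' = t f - U with f rapid, then (1 + t^2) f^2 + f'^2 = U^2 + (t f^2)', so
   the weighted energy of f is controlled by the L^2 norm of U. *)
Lemma energy_bound (f U : R -> R) B : Derivable U -> rapid f ->
  (forall x : R, is_derive f x (x * f x - U x)) ->
  (forall a b, a <= b -> RInt (fun t => U t * U t) a b <= B) ->
  forall a b, a <= b ->
  RInt (fun t => (1 + t * t) * (f t * f t) + (t * f t - U t) * (t * f t - U t)) a b <= B.
Proof.
  intros DU Hf Hder HU.
  assert (Df : Derivable f) by (intro x; eexists; apply Hder).
  set (W := fun t => t * (f t * f t)).
  assert (HW : forall x : R, is_derive W x (f x * f x + 2 * x * f x * (x * f x - U x))).
  { intro x. unfold W. eapply is_derive_transport; [reflexivity | |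
      apply is_derive_Rmult; [apply (is_derive_id (K := R_AbsRing))
                             | apply is_derive_Rmult; apply Hder]].
    unfold one; simpl. ring. }
  apply (RInt_bound_of_sym _ _ (fun m => W (INR m) - W (- INR m))).
  - derivable.
  - intro t. pose proof (Rle_0_sqr (f t)). pose proof (Rle_0_sqr t).
    pose proof (Rle_0_sqr (t * f t - U t)). unfold Rsqr in *. nra.
  - intro m. unfold on_sym. pose proof (pos_INR m).
    rewrite (RInt_ext_R _ (fun t => U t * U t + (f t * f t + 2 * t * f t * (t * f t - U t))))
      by (intro t; ring).
    rewrite RInt_Rplus by derivable.
    rewrite (RInt_antiderivative (fun t => f t * f t + 2 * t * f t * (t * f t - U t)) W)
      by derivable.
    pose proof (HU (- INR m) (INR m) ltac:(lra)). lra.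
  - apply rapid_boundary_lim. unfold W. apply rapid_tmul, rapid_mult; exact Hf.
Qed.

Definition raise (c : nat -> R) (j : nat) : R :=
  match j with O => 0 | S k => c k * ladder (S k) end.

Lemma is_derive_hermite_sum c M (x : R) :
  is_derive (hermite_sum c M) x (x * hermite_sum c M x - hermite_sum (raise c) (S M) x).
Proof.
  induction M as [|M IH].
  - eapply is_derive_transport with (f := fun t => c 0%nat * h 0 t);
      [reflexivity | | apply is_derive_scal, is_derive_hermite_fn].
    unfold hermite_sum. simpl. ring.
  - eapply is_derive_transport; [intro t; symmetry; apply hermite_sum_S | |
      apply is_derive_Rplus; [exact IH | apply is_derive_scal, is_derive_hermite_fn]].
    rewrite !hermite_sum_S. simpl raise. ring.
Qed.

Lemma raise_sum_sq c M :
  sum_f_R0 (fun j => raise c j * raise c j) (S M)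
  = sum_f_R0 (fun k => (c k * ladder (S k)) * (c k * ladder (S k))) M.
Proof. rewrite (decomp_sum _ (S M)) by lia. simpl. ring. Qed.

Lemma two_mul_le_young s u v : 0 < s -> 2 * u * v <= s * (u * u) + / s * (v * v).
Proof.
  intro Hs. apply Rmult_le_reg_l with s; [exact Hs|].
  replace (s * (s * (u * u) + / s * (v * v))) with ((s * u) * (s * u) + v * v) by (field; lra).
  pose proof (Rle_0_sqr (s * u - v)). unfold Rsqr in *. nra.
Qed.

(* Weighted Cauchy-Schwarz in AM-GM form: 2|f| <= eps (1+t^2) f^2 + 1/(eps (1+t^2)),
   and 1/(1+t^2) integrates to at most pi. *)
Lemma RInt_weighted_bound (f g : R -> R) Q eps a x :
  Derivable f -> Derivable g -> (forall t, (1 + t * t) * (f t * f t) <= g t) ->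
  RInt g a x <= Q -> 0 < eps -> a <= x ->
  Rabs (RInt f a x) <= (eps * Q + PI / eps) / 2.
Proof.
  intros Df Dg Hfg HQ He Hax.
  set (b := fun t => / 2 * (eps * g t + / eps * / (1 + t ^ 2))).
  assert (Hb : forall t, - b t <= f t <= b t).
  { intro t. unfold b. pose proof (one_le_1_sq t) as Hw. specialize (Hfg t).
    set (w := 1 + t ^ 2) in *. replace (1 + t * t) with w in Hfg by (unfold w; ring).
    assert (Hp : 0 < eps * w) by (apply Rmult_lt_0_compat; lra).
    pose proof (two_mul_le_young (eps * w) (f t) 1 Hp) as A1.
    pose proof (two_mul_le_young (eps * w) (- f t) 1 Hp) as A2.
    rewrite Rinv_mult in A1, A2.
    split; nra. }
  assert (I1 : RInt f a x <= RInt b a x) by (apply RInt_le_R; unfold b; derivable; apply Hb).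
  assert (I2 : RInt (fun t => - b t) a x <= RInt f a x)
    by (apply RInt_le_R; unfold b; derivable; apply Hb).
  assert (Eb : RInt b a x = / 2 * (eps * RInt g a x + / eps * (atan x - atan a))).
  { unfold b. rewrite RInt_Rscal, RInt_Rplus, !RInt_Rscal, RInt_inv_1_sq by derivable.
    reflexivity. }
  rewrite (RInt_ext_R (fun t => - b t) (fun t => (-1) * b t)) in I2 by (intro; ring).
  rewrite RInt_Rscal in I2 by (unfold b; derivable).
  pose proof (atan_bound a). pose proof (atan_bound x).
  assert (eps * RInt g a x <= eps * Q) by (apply Rmult_le_compat_l; lra).
  assert (/ eps * (atan x - atan a) <= / eps * PI).
  { apply Rmult_le_compat_l; [left; apply Rinv_0_lt_compat; lra | lra]. }
  apply Rabs_le. rewrite Eb in I1, I2. unfold Rdiv. split; lra.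
Qed.

Lemma RInt_hermite_sum c M a b :
  RInt (hermite_sum c M) a b = sum_f_R0 (fun k => c k * RInt (h k) a b) M.
Proof.
  induction M as [|M IH]; simpl.
  - rewrite <- RInt_Rscal by derivable. reflexivity.
  - rewrite <- IH, <- RInt_Rscal, <- RInt_Rplus by derivable. reflexivity.
Qed.

Lemma F_hat_lim n xs N x :
  is_lim_seq (fun m => RInt (hermite_sum (a_hat n xs) N) (- INR m) x) (F_hat n xs N x).
Proof.
  eapply is_lim_seq_ext; [intro m; symmetry; apply RInt_hermite_sum|].
  unfold F_hat, hermite_int. induction N as [|N IH]; simpl.
  - apply (is_lim_seq_scal_l_real _ (a_hat n xs _)), RInt_gen_seq_lim; [derivable | apply rapid_hermite_fn].
  - apply is_lim_seq_plus'; [exact IH|].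
    apply (is_lim_seq_scal_l_real _ (a_hat n xs _)), RInt_gen_seq_lim; [derivable | apply rapid_hermite_fn].
Qed.

Lemma mean_sq_le (u : nat -> R) n V : (0 < n)%nat -> (forall i, u i * u i <= V) ->
  (/ INR n * sum_f_R0 u (pred n)) * (/ INR n * sum_f_R0 u (pred n)) <= V.
Proof.
  intros Hn Hu.
  assert (HV : 0 <= V) by (specialize (Hu 0%nat); pose proof (Rle_0_sqr (u 0%nat)); unfold Rsqr in *; lra).
  assert (Habs : forall i, Rabs (u i) <= sqrt V).
  { intro i. rewrite <- sqrt_Rsqr_abs. apply sqrt_le_1_alt. apply Hu. }
  assert (Hsum : Rabs (sum_f_R0 u (pred n)) <= INR n * sqrt V).
  { replace (INR n) with (INR (S (pred n))) by (f_equal; lia).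
    generalize (pred n). intro p. induction p as [|p IH]; simpl sum_f_R0.
    - rewrite Rmult_1_l. apply Habs.
    - eapply Rle_trans; [apply Rabs_triang|]. specialize (Habs (S p)).
      rewrite !S_INR in *.
      replace ((INR p + 1 + 1) * sqrt V) with ((INR p + 1) * sqrt V + sqrt V) by ring. lra. }
  assert (Hn' : 0 < INR n) by (apply lt_0_INR; lia).
  assert (Hmean : Rabs (/ INR n * sum_f_R0 u (pred n)) <= sqrt V).
  { rewrite Rabs_mult, Rabs_right by (left; apply Rinv_0_lt_compat; lra).
    apply Rmult_le_reg_l with (INR n); [lra|].
    rewrite <- Rmult_assoc, Rinv_r, Rmult_1_l by lra. exact Hsum. }
  set (mu := / INR n * sum_f_R0 u (pred n)) in *.
  rewrite <- (sqrt_sqrt V HV).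
  replace (mu * mu) with (Rabs mu * Rabs mu)
    by (rewrite <- Rabs_mult; apply Rabs_right, Rle_ge, Rle_0_sqr).
  apply Rmult_le_compat; auto using Rabs_pos.
Qed.

Section Gram00Bound.
Variable c0 : R.
Hypothesis gram00_le : forall a b, a <= b -> gram 0 0 a b <= c0.

Lemma gram00_bound_nonneg : 0 <= c0.
Proof.
  specialize (gram00_le 0 0 (Rle_refl 0)). unfold gram in gram00_le.
  rewrite RInt_point in gram00_le. exact gram00_le.
Qed.

Lemma gram_diag_bound k a b : a <= b -> gram k k a b <= c0.
Proof.
  apply (RInt_bound_of_sym _ c0 (fun m => on_sym (gram k k) m - on_sym (gram 0 0) m)).
  - derivable.
  - intro t. apply Rle_0_sqr.
  - intro m. pose proof (pos_INR m).
    pose proof (gram00_le (- INR m) (INR m) ltac:(lra)). unfold on_sym, gram in *. lra.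
  - apply gram_diag_lim.
Qed.

Lemma hermite_sum_L2_bound c M a b : a <= b ->
  RInt (fun t => hermite_sum c M t * hermite_sum c M t) a b <= c0 * sum_f_R0 (fun k => c k * c k) M.
Proof.
  apply (RInt_bound_of_sym _ _ (fun m =>
    on_sym (RInt (fun t => hermite_sum c M t * hermite_sum c M t)) m
    - on_sym (gram 0 0) m * sum_f_R0 (fun k => c k * c k) M));
    [derivable | intro t; apply Rle_0_sqr | | apply hermite_sum_sq_lim].
  intro m. pose proof (pos_INR m). pose proof (sum_sq_nonneg c M).
  pose proof (gram00_le (- INR m) (INR m) ltac:(lra)).
  assert (on_sym (gram 0 0) m * sum_f_R0 (fun k => c k * c k) M <= c0 * sum_f_R0 (fun k => c k * c k) M)
    by (apply Rmult_le_compat_r; auto).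
  lra.
Qed.

Lemma hermite_sum_energy c M a b : a <= b ->
  RInt (fun t => (1 + t * t) * (hermite_sum c M t * hermite_sum c M t)
          + (t * hermite_sum c M t - hermite_sum (raise c) (S M) t)
            * (t * hermite_sum c M t - hermite_sum (raise c) (S M) t)) a b
  <= c0 * sum_f_R0 (fun k => (c k * ladder (S k)) * (c k * ladder (S k))) M.
Proof.
  rewrite <- raise_sum_sq.
  apply energy_bound; derivable.
  - apply rapid_hermite_sum.
  - intro x. apply is_derive_hermite_sum.
  - apply hermite_sum_L2_bound.
Qed.

Lemma hermite_fn_energy k a b : a <= b ->
  RInt (fun t => (1 + t * t) * (h k t * h k t)
          + (t * h k t - ladder (S k) * h (S k) t) * (t * h k t - ladder (S k) * h (S k) t)) a b
  <= ladder (S k) * ladder (S k) * c0.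
Proof.
  apply (energy_bound (h k) (fun t => ladder (S k) * h (S k) t)); derivable.
  - apply rapid_hermite_fn.
  - intro x. apply is_derive_hermite_fn.
  - intros a' b' Hab.
    rewrite (RInt_ext_R _ (fun t => (ladder (S k) * ladder (S k)) * (h (S k) t * h (S k) t)))
      by (intro; ring).
    rewrite RInt_Rscal by derivable.
    apply Rmult_le_compat_l; [apply Rle_0_sqr | apply gram_diag_bound; exact Hab].
Qed.

(* Integrating (h_k^2)' = 2 h_k h_k' over [a, y] and bounding 2 h_k h_k' by
   s h_k^2 + h_k'^2 / s with s = sqrt(2(k+1)): h_k(y)^2 <= h_k(a)^2 + 2 c0 s. *)
Lemma hermite_fn_sq_step k a y : a <= y ->
  h k y * h k y <= h k a * h k a + 2 * c0 * ladder (S k).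
Proof.
  intro Ha.
  set (s := ladder (S k)). pose proof (ladder_pos k) as Hs. fold s in Hs.
  set (v := fun t => t * h k t - s * h (S k) t).
  set (g := fun t => (1 + t * t) * (h k t * h k t) + v t * v t).
  assert (E : RInt (fun t => 2 * h k t * v t) a y = h k y * h k y - h k a * h k a).
  { apply (RInt_antiderivative _ (fun t => h k t * h k t)); [unfold v; derivable|].
    intro x. eapply is_derive_transport; [reflexivity | |
      apply is_derive_Rmult; apply is_derive_hermite_fn].
    unfold v. fold s. ring. }
  assert (I : RInt (fun t => 2 * h k t * v t) a y
              <= RInt (fun t => s * (h k t * h k t) + / s * g t) a y).
  { apply RInt_le_R; [unfold v; derivable | unfold g, v; derivable | exact Ha |].
    intro t. eapply Rle_trans; [apply (two_mul_le_young s); exact Hs|].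
    apply Rplus_le_compat_l, Rmult_le_compat_l; [left; apply Rinv_0_lt_compat; exact Hs|].
    unfold g. pose proof (Rle_0_sqr t). pose proof (Rle_0_sqr (h k t)). unfold Rsqr in *.
    assert (0 <= (1 + t * t) * (h k t * h k t)) by (apply Rmult_le_pos; lra). lra. }
  rewrite RInt_Rplus, !RInt_Rscal in I by (unfold g, v; derivable).
  pose proof (gram_diag_bound k a y Ha) as Hg. unfold gram in Hg.
  assert (Hga : RInt g a y <= s * s * c0) by exact (hermite_fn_energy k a y Ha).
  assert (s * RInt (fun t => h k t * h k t) a y <= s * c0) by (apply Rmult_le_compat_l; lra).
  assert (Hg' : / s * RInt g a y <= / s * (s * s * c0))
    by (apply Rmult_le_compat_l; [left; apply Rinv_0_lt_compat|]; lra).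
  replace (/ s * (s * s * c0)) with (s * c0) in Hg' by (field; lra).
  lra.
Qed.

(* Letting a -> -oo, where h_k vanishes: h_k^2 <= 2 c0 sqrt(2(k+1)) uniformly. *)
Lemma hermite_fn_sq_le k y : h k y * h k y <= 2 * c0 * ladder (S k).
Proof.
  apply (le_of_vanishing_error _ _ (fun m => h k (- INR m) * h k (- INR m))).
  - generalize (eventually_INR_ge (- y)). apply filter_imp. intros m Hm.
    rewrite Rplus_comm. apply hermite_fn_sq_step. lra.
  - apply (rapid_lim_neg (fun t => h k t * h k t)), rapid_hermite_prod.
Qed.

Definition energy (c : nat -> R) (M : nat) : R :=
  c0 * sum_f_R0 (fun k => (c k * ladder (S k)) * (c k * ladder (S k))) M.

Lemma hermite_sum_RInt_bound c M a x eps : a <= x -> 0 < eps ->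
  Rabs (RInt (hermite_sum c M) a x) <= (eps * energy c M + PI / eps) / 2.
Proof.
  intros Hax He.
  set (v := fun t => t * hermite_sum c M t - hermite_sum (raise c) (S M) t).
  apply (RInt_weighted_bound _
    (fun t => (1 + t * t) * (hermite_sum c M t * hermite_sum c M t) + v t * v t));
    [derivable | unfold v; derivable | | | exact He | exact Hax].
  - intro t. pose proof (Rle_0_sqr (v t)). unfold Rsqr in *. lra.
  - apply hermite_sum_energy. exact Hax.
Qed.

Lemma F_hat_bound n xs N x eps : 0 < eps ->
  Rabs (F_hat n xs N x) <= (eps * energy (a_hat n xs) N + PI / eps) / 2.
Proof.
  intro He.
  pose proof (is_lim_seq_abs _ _ (F_hat_lim n xs N x)) as Hlim.
  refine (is_lim_seq_le_loc _ _ _ _ _ Hlim (is_lim_seq_const _)).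
  generalize (eventually_INR_ge (- x)). apply filter_imp. intros m Hm.
  apply hermite_sum_RInt_bound; [lra | exact He].
Qed.
End Gram00Bound.

Lemma ladder_le_sqrt k N : (k <= N)%nat -> (1 <= N)%nat -> ladder (S k) <= 2 * sqrt (INR N).
Proof.
  intros HkN HN. apply Rsqr_incr_0_var.
  - unfold Rsqr. rewrite ladder_sq.
    replace (2 * sqrt (INR N) * (2 * sqrt (INR N))) with (4 * (sqrt (INR N) * sqrt (INR N))) by ring.
    rewrite sqrt_sqrt by apply pos_INR.
    apply le_INR in HkN. apply le_INR in HN. rewrite S_INR. simpl in HN. lra.
  - pose proof (sqrt_pos (INR N)). lra.
Qed.

Lemma energy_le c0 c N : 0 <= c0 -> (1 <= N)%nat ->
  (forall k, c k * c k <= 2 * c0 * ladder (S k)) ->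
  energy c0 c N <= 32 * c0 * c0 * (INR N * INR N * sqrt (INR N)).
Proof.
  intros Hc0 HN Hc. unfold energy.
  set (s := sqrt (INR N)).
  assert (Hs : 0 <= s) by apply sqrt_pos.
  assert (Hss : s * s = INR N) by (apply sqrt_sqrt, pos_INR).
  assert (Hterm : forall k, (k <= N)%nat ->
            (c k * ladder (S k)) * (c k * ladder (S k)) <= 16 * c0 * (INR N * s)).
  { intros k Hk. pose proof (ladder_le_sqrt k N Hk HN) as Hl. fold s in Hl.
    pose proof (ladder_pos k) as Hl0. specialize (Hc k).
    replace ((c k * ladder (S k)) * (c k * ladder (S k)))
      with ((c k * c k) * (ladder (S k) * ladder (S k))) by ring.
    apply Rle_trans with ((2 * c0 * ladder (S k)) * (ladder (S k) * ladder (S k))).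
    { apply Rmult_le_compat_r; [apply Rle_0_sqr | exact Hc]. }
    rewrite <- Hss.
    replace (2 * c0 * ladder (S k) * (ladder (S k) * ladder (S k)))
      with (2 * c0 * (ladder (S k) * (ladder (S k) * ladder (S k)))) by ring.
    replace (16 * c0 * (s * s * s)) with (2 * c0 * ((2 * s) * ((2 * s) * (2 * s)))) by ring.
    apply Rmult_le_compat_l; [lra|].
    apply Rmult_le_compat; [lra | apply Rmult_le_pos; lra | lra |].
    apply Rmult_le_compat; lra. }
  apply Rle_trans with (c0 * sum_f_R0 (fun _ => 16 * c0 * (INR N * s)) N).
  { apply Rmult_le_compat_l; [exact Hc0|]. apply sum_Rle. intros k Hk. apply Hterm. exact Hk. }
  rewrite sum_cte, S_INR.
  assert (HN1 : 1 <= INR N) by (apply le_INR in HN; simpl in HN; exact HN).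
  assert (0 <= c0 * (16 * c0 * (INR N * s))) by (apply Rmult_le_pos; [|apply Rmult_le_pos]; nra).
  replace (32 * c0 * c0 * (INR N * INR N * s))
    with (c0 * (16 * c0 * (INR N * s)) * (2 * INR N)) by ring.
  rewrite <- Rmult_assoc. apply Rmult_le_compat_l; lra.
Qed.

Lemma Rpower_5_4_sq x : 0 < x -> Rpower x (5 / 4) * Rpower x (5 / 4) = x * x * sqrt x.
Proof.
  intro Hx. rewrite <- Rpower_plus.
  replace (5 / 4 + 5 / 4) with (INR 2 + / 2) by (simpl; field).
  rewrite Rpower_plus, Rpower_pow, Rpower_sqrt by exact Hx. simpl. ring.
Qed.

Theorem lemma1 :
  exists C : R,
    forall (n : nat) (xs : nat -> R), (0 < n)%nat ->
    forall (N : nat), (1 <= N)%nat ->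
    forall x : R, Rabs (F_hat n xs N x) <= C * Rpower (INR N) (17 / 12).
Proof.
  destruct gram00_bounded as [c0 Hc0].
  pose proof (gram00_bound_nonneg c0 Hc0) as Hc0_pos.
  exists ((32 * c0 * c0 + PI) / 2). intros n xs Hn N HN x.
  assert (HN1 : 1 <= INR N) by (apply le_INR in HN; exact HN).
  set (P := Rpower (INR N) (5 / 4)).
  assert (HP : 0 < P) by apply exp_pos.
  (* Each empirical coefficient is a mean of values of h_k, bounded uniformly. *)
  assert (Hcoef : forall k, a_hat n xs k * a_hat n xs k <= 2 * c0 * ladder (S k))
    by (intro k; apply mean_sq_le; [exact Hn | intro i; apply (hermite_fn_sq_le c0 Hc0)]).
  assert (Henergy : energy c0 (a_hat n xs) N <= 32 * c0 * c0 * (P * P)).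
  { unfold P. rewrite Rpower_5_4_sq by lra. apply energy_le; assumption. }
  (* Balancing with eps = 1/P gives |F_hat| <= C N^(5/4) <= C N^(17/12). *)
  eapply Rle_trans; [apply (F_hat_bound c0 Hc0 n xs N x (/ P)); apply Rinv_0_lt_compat, HP|].
  apply Rle_trans with ((32 * c0 * c0 + PI) / 2 * P).
  - unfold Rdiv. rewrite Rinv_inv.
    assert (Hscaled : / P * energy c0 (a_hat n xs) N <= / P * (32 * c0 * c0 * (P * P)))
      by (apply Rmult_le_compat_l; [left; apply Rinv_0_lt_compat|]; lra).
    replace (/ P * (32 * c0 * c0 * (P * P))) with (32 * c0 * c0 * P) in Hscaled by (field; lra).
    lra.
  - apply Rmult_le_compat_l.
    + pose proof PI_RGT_0. pose proof (Rle_0_sqr c0). unfold Rsqr in *. lra.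
    + unfold P. apply Rle_Rpower; lra.
Qed.
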